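(* Let $n\ge5$ be odd and $M$ an $n\times n$ HW-matrix. There is no spin$^c$ set $S$ for $M$ with $|S|=n$.
   Context: $\mathcal S=\{0,1,2,3\}$ is the Klein four-group ($\mathbb Z_2$-vector space) with $x+x=0$, $1+2=3$, $1+3=2$, $2+3=1$. $\mathcal P_n$ is the power set of $\{1,\dots,n\}$ (addition = symmetric difference, product = intersection); $|U|_2=|U|\bmod 2$; $J_M(U)=\{j:\sum_{i\in U}M_{ij}=1\}$. $M$ is an HW-matrix if it has $1$ on the diagonal and $2$ or $3$ off the diagonal, all column sums are $0$, and $J_M(U)\ne\emptyset$ for all $U\ne\emptyset,\{1,\dots,n\}$. $S\in\mathcal P_n$ is a spin$^c$ set for $M$ if $|(J_M(U)+U)\cap S|_2=\binom{|U|}2\bmod 2$ for all $U\in\mathcal P_n$. *)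

From mathcomp Require Import all_boot.
Set Implicit Arguments. Unset Strict Implicit. Unset Printing Implicit Defensive.

(* Klein four-group S = {0,1,2,3}, encoded as 'I_4; addition is bitwise xor
   of the two-bit encodings (so x+x=0, 1+2=3, 1+3=2, 2+3=1). *)
Definition klein := 'I_4.

Definition kadd_nat (a b : nat) : nat :=
  (odd a (+) odd b) + ((odd a./2 (+) odd b./2) * 2).

Lemma kadd_lt (a b : nat) : kadd_nat a b < 4.
Proof. by rewrite /kadd_nat; case: (_ (+) _); case: (_ (+) _). Qed.

Definition kadd (x y : klein) : klein := Ordinal (kadd_lt x y).
Definition k0 : klein := @Ordinal 4 0 erefl.
Definition k1 : klein := @Ordinal 4 1 erefl.
Definition k2 : klein := @Ordinal 4 2 erefl.
Definition k3 : klein := @Ordinal 4 3 erefl.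

Definition colsum n (M : 'I_n -> 'I_n -> klein) (U : {set 'I_n}) (j : 'I_n) : klein :=
  foldr (fun i acc => kadd (M i j) acc) k0 (enum U).

Definition JM n (M : 'I_n -> 'I_n -> klein) (U : {set 'I_n}) : {set 'I_n} :=
  [set j | colsum M U j == k1].

(* symmetric difference = addition in P_n *)
Definition symdiff n (A B : {set 'I_n}) : {set 'I_n} := (A :\: B) :|: (B :\: A).

Definition HW_matrix n (M : 'I_n -> 'I_n -> klein) : Prop :=
  (forall i, M i i = k1) /\
  (forall i j, i != j -> M i j = k2 \/ M i j = k3) /\
  (forall j, colsum M [set: 'I_n] j = k0) /\
  (forall U : {set 'I_n}, U != set0 -> U != [set: 'I_n] -> JM M U != set0).

Definition spinc_set n (M : 'I_n -> 'I_n -> klein) (S : {set 'I_n}) : Prop :=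
  forall U : {set 'I_n},
    odd #|symdiff (JM M U) U :&: S| = odd 'C(#|U|, 2).

From mathcomp Require Import all_boot.
Set Implicit Arguments. Unset Strict Implicit. Unset Printing Implicit Defensive.

(* An element of the Klein group S = (Z/2)^2 is a pair of bits
   (lo, hi); 1 = (1,0), 2 = (0,1), 3 = (1,1).  For an HW-matrix the high bit of
   M_ik is [i != k], so everything is governed by the low bits x_ik := lo M_ik.
   A spin^c set of size n is the whole index set, and we extract two facts:
   - every column has an odd number of off-diagonal entries with x = 1
     (column sums vanish and the diagonal is 1);
   - for distinct a, b, c, exactly one of a, b, c "sees a disagreement" in its
     column, i.e. x_ba != x_ca etc. (spin^c and J_M nonempty on U = {a,b,c}).
   A purely combinatorial argument shows that no relation on a set of odd size
   has both properties: fixing a column j, the rows i != j with x_ij = 1 carry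
   a strict order "m beats i" (x_mi != x_ji), each element is beaten by an odd
   number of others, yet a minimal element is beaten by none. *)

Lemma card_set_seq (T : finType) (s : seq T) (P : pred T) :
  uniq s -> #|[set v in s | P v]| = count P s.
Proof.
move=> us; rewrite -size_filter -(card_uniqP (filter_uniq P us)).
by apply: eq_card => v; rewrite inE mem_filter andbC.
Qed.

Lemma exactly_one (p q r : bool) : odd (p + q + r) -> ~~ [&& p, q & r] -> p + q + r == 1.
Proof. by case: p; case: q; case: r. Qed.

Definition lo (v : klein) : bool := odd v.
Definition hi (v : klein) : bool := odd v./2.

Lemma lo_kadd (a b : klein) : lo (kadd a b) = lo a (+) lo b.
Proof. by rewrite /lo /= /kadd_nat; case: (_ (+) _); case: (_ (+) _). Qed.

Lemma hi_kadd (a b : klein) : hi (kadd a b) = hi a (+) hi b.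
Proof. by rewrite /hi /= /kadd_nat; case: (_ (+) _); case: (_ (+) _). Qed.

Lemma eq_k1 (v : klein) : (v == k1) = lo v && ~~ hi v.
Proof. by case: v => [[|[|[|[|m]]]] lt_v4]. Qed.

Section AdditiveBitOfColumnSum.

Variable bit : klein -> bool.
Hypothesis bit_k0 : bit k0 = false.
Hypothesis bit_kadd : forall a b, bit (kadd a b) = bit a (+) bit b.

Lemma bit_colsum n (M : 'I_n -> 'I_n -> klein) (U : {set 'I_n}) (j : 'I_n) :
  bit (colsum M U j) = odd #|[set i in U | bit (M i j)]|.
Proof.
rewrite -[U in RHS]set_enum.
have -> : [set i in [set i in enum U] | bit (M i j)] = [set i in enum U | bit (M i j)].
  by apply/setP => i; rewrite !inE.
rewrite card_set_seq ?enum_uniq // /colsum.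
elim: (enum U) => [|a s IH] //=.
by rewrite bit_kadd IH oddD oddb.
Qed.

End AdditiveBitOfColumnSum.

Lemma lo_colsum n (M : 'I_n -> 'I_n -> klein) U j :
  lo (colsum M U j) = odd #|[set i in U | lo (M i j)]|.
Proof. exact: (@bit_colsum lo erefl lo_kadd). Qed.

Lemma hi_colsum n (M : 'I_n -> 'I_n -> klein) U j :
  hi (colsum M U j) = odd #|[set i in U | hi (M i j)]|.
Proof. exact: (@bit_colsum hi erefl hi_kadd). Qed.

Lemma exists_minimal (T : finType) (C : {set T}) (r : rel T) :
  C != set0 ->
  (forall i, i \in C -> ~~ r i i) ->
  (forall m k i, m \in C -> k \in C -> i \in C -> r m k -> r k i -> r m i) ->
  exists2 i, i \in C & [set m in C | r m i] = set0.
Proof.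
case/set0Pn=> i0 Ci0 irr trans.
pose below i := [set m in C | r m i].
case: (@arg_minnP _ i0 (mem C) (fun i => #|below i|) Ci0) => i Ci minimal.
exists i => //; apply/eqP/negPn/negP => /set0Pn [k].
rewrite inE => /andP [Ck rki].
suff : #|below k| < #|below i| by rewrite ltnNge minimal.
apply: proper_card; apply/properP; split.
  apply/subsetP => m; rewrite !inE => /andP [Cm rmk].
  by rewrite Cm (trans m k i).
by exists k; rewrite !inE ?Ck ?rki // (negbTE (irr k Ck)).
Qed.

Section OddTournament.

Variables (T : finType) (x : rel T).
Hypothesis odd_card : odd #|T|.
Hypothesis odd_column : forall i, odd #|[set m | (m != i) && x m i]|.
Hypothesis triple_rule : forall a b c, a != b -> a != c -> b != c ->
  (x b a != x c a) + (x a b != x c b) + (x a c != x b c) == 1.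

(* Column parity is unchanged when counting disagreements with any bit c,
   because the number of off-diagonal rows, #|T| - 1, is even. *)
Lemma odd_disagree (c : bool) (i : T) :
  odd #|[set m | (m != i) && (x m i != c)]|.
Proof.
have off_diag_even : ~~ odd #|[set~ i]|.
  by rewrite cardsC1; move: odd_card; case: #|T|.
have := cardsID [set m | x m i] [set~ i].
have -> : [set~ i] :&: [set m | x m i] = [set m | (m != i) && x m i].
  by apply/setP => m; rewrite !inE.
have -> : [set~ i] :\: [set m | x m i] = [set m | (m != i) && ~~ x m i].
  by apply/setP => m; rewrite !inE andbC.
move/(congr1 odd); rewrite oddD odd_column (negbTE off_diag_even) => odd_ones.
case: c.
- have -> : [set m | (m != i) && (x m i != true)] = [set m | (m != i) && ~~ x m i].
    by apply/setP => m; rewrite !inE; case: (x m i).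
  by move: odd_ones; rewrite addTb => /negbFE.
- have -> : [set m | (m != i) && (x m i != false)] = [set m | (m != i) && x m i].
    by apply/setP => m; rewrite !inE; case: (x m i).
  exact: odd_column.
Qed.

Variable j : T.

Definition ones : {set T} := [set i | (i != j) && x i j].

Definition beats (m i : T) : bool := (m != i) && (x m i != x j i).

Lemma agree_off_ones (i m : T) :
  i \in ones -> m != j -> ~~ x m j -> x m i = x j i.
Proof.
rewrite inE => /andP [ij xij] mj xmj.
have im : i != m by apply: contraNneq xmj => <-.
have jm : j != m by rewrite eq_sym.
move: (triple_rule ij im jm); rewrite xij (negbTE xmj).
by case: (x j i); case: (x m i); case: (x i m); case: (x j m).
Qed.

Lemma beats_asym (m i : T) :
  m \in ones -> i \in ones -> m != i -> beats m i = ~~ beats i m.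
Proof.
rewrite !inE /beats => /andP [mj xmj] /andP [ij xij] mi.
have jm : j != m by rewrite eq_sym.
have ji : j != i by rewrite eq_sym.
move: (triple_rule jm ji mi); rewrite xmj xij (eq_sym i m) mi /=.
by case: (x j m); case: (x i m); case: (x j i); case: (x m i).
Qed.

Lemma beats_trans (m k i : T) : m \in ones -> k \in ones -> i \in ones ->
  beats m k -> beats k i -> beats m i.
Proof.
move=> mC kC iC bmk bki.
have mk : m != k by case/andP: bmk.
have ki : k != i by case/andP: bki.
have mi : m != i.
  by apply: contraTneq bki => <-; rewrite beats_asym 1?eq_sym // negbK.
move: (beats_asym kC iC ki) (beats_asym mC kC mk) (beats_asym mC iC mi).
move: (triple_rule mk mi ki) bmk bki.
rewrite /beats mk ki mi !(eq_sym k) !(eq_sym i) mk ki mi /=.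
by case: (x j k); case: (x j i); case: (x j m); case: (x k m); case: (x i m);
   case: (x m k); case: (x i k); case: (x m i); case: (x k i).
Qed.

Lemma odd_beaten (i : T) : i \in ones -> odd #|[set m in ones | beats m i]|.
Proof.
move=> iC.
suff -> : [set m in ones | beats m i] = [set m | (m != i) && (x m i != x j i)].
  exact: odd_disagree.
apply/setP => m; rewrite !inE /beats.
case: (eqVneq m j) => [->|mj]; first by rewrite eqxx andbF.
case xmj: (x m j) => //=.
by rewrite (agree_off_ones iC mj (negbT xmj)) eqxx andbF.
Qed.

(* A minimal element of the tournament would be beaten by nobody. *)
Lemma no_odd_tournament : False.
Proof.
have ones_nonempty : ones != set0.
  by apply: contraTneq (odd_column j); rewrite -/ones => ->; rewrite cards0.
have beats_irr i : i \in ones -> ~~ beats i i by rewrite /beats eqxx.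
have [i iC no_beater] := exists_minimal ones_nonempty beats_irr beats_trans.
by have := odd_beaten iC; rewrite no_beater cards0.
Qed.

End OddTournament.

Section HWMatrix.

Variables (n : nat) (M : 'I_n -> 'I_n -> klein).
Hypothesis HM : HW_matrix M.

Lemma hi_HW (i k : 'I_n) : hi (M i k) = (i != k).
Proof.
case: HM => diag [off _]; case: (eqVneq i k) => [<-|ik]; first by rewrite diag.
by case: (off _ _ ik) => ->.
Qed.

Lemma lo_diag (i : 'I_n) : lo (M i i).
Proof. by case: HM => diag _; rewrite diag. Qed.

Lemma in_JM (U : {set 'I_n}) (v : 'I_n) :
  (v \in JM M U) = ((v \in U) == odd #|U|) && odd #|[set i in U | lo (M i v)]|.
Proof.
rewrite inE eq_k1 lo_colsum hi_colsum andbC; congr (_ && _).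
have -> : [set i in U | hi (M i v)] = U :\ v.
  by apply/setP => i; rewrite !inE hi_HW andbC.
by rewrite [in odd #|U|](cardsD1 v U) oddD oddb; case: (v \in U); case: (odd _).
Qed.

(* Column parity: an odd number of off-diagonal entries of each column are
   odd, since the column sums to 0 and the diagonal entry is 1. *)
Lemma odd_off_column (i : 'I_n) : odd #|[set m | (m != i) && lo (M m i)]|.
Proof.
case: HM => _ [_ [colsum0 _]].
have := lo_colsum M [set: 'I_n] i; rewrite colsum0 [#|_|](cardsD1 i) !inE lo_diag.
have -> : [set m in [set: 'I_n] | lo (M m i)] :\ i = [set m | (m != i) && lo (M m i)].
  by apply/setP => m; rewrite !inE.
by rewrite oddD /lo /=; case: (odd _).
Qed.

Lemma HW_triple_rule (a b c : 'I_n) :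
  spinc_set M [set: 'I_n] -> 3 < n -> a != b -> a != c -> b != c ->
  (lo (M b a) != lo (M c a)) + (lo (M a b) != lo (M c b))
    + (lo (M a c) != lo (M b c)) == 1.
Proof.
move=> spinc n_gt3 ab ac bc.
pose s := [:: a; b; c]; pose U := [set v in s].
have s_uniq : uniq s by rewrite /= !inE negb_or ab ac bc.
have on_U P : [set v in U | P v] = [set v in s | P v].
  by apply/setP => v; rewrite !inE.
have U_card : #|U| = 3 by rewrite cardsE; apply/card_uniqP.
pose even_col v := ~~ odd (count (fun i => lo (M i v)) s).
have col_a : even_col a = (lo (M b a) != lo (M c a)).
  by rewrite /even_col /= lo_diag; case: (lo _); case: (lo _).
have col_b : even_col b = (lo (M a b) != lo (M c b)).
  by rewrite /even_col /= lo_diag; case: (lo _); case: (lo _).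
have col_c : even_col c = (lo (M a c) != lo (M b c)).
  by rewrite /even_col /= lo_diag; case: (lo _); case: (lo _).
have JM_U v : (v \in JM M U) = (v \in s) && ~~ even_col v.
  rewrite in_JM U_card on_U card_set_seq // negbK inE.
  by case: (v \in s).
have spinc_U := spinc U.
have symdiff_U : symdiff (JM M U) U :&: [set: 'I_n] = [set v in s | even_col v].
  apply/setP => v; rewrite /symdiff in_setI in_setT in_setU !in_setD JM_U !inE.
  by case: [|| _, _ | _]; case: (even_col v).
rewrite symdiff_U U_card card_set_seq //= col_a col_b col_c addn0 addnA in spinc_U.
apply: (exactly_one spinc_U).
have : JM M U != set0.
  case: HM => _ [_ [_ nonempty]]; apply: nonempty.
    by apply/set0Pn; exists a; rewrite inE mem_head.
  by apply: contraTneq n_gt3 => U_full; move: U_card; rewrite U_full cardsT card_ord => ->.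
case/set0Pn => v; rewrite JM_U !inE -col_a -col_b -col_c.
case/andP; case/or3P => /eqP ->; apply: contra => /and3P [? ? ?] //.
Qed.

End HWMatrix.

Theorem mainTheorem15 (n : nat) (M : 'I_n -> 'I_n -> klein) :
  5 <= n -> odd n -> HW_matrix M ->
  ~ (exists S : {set 'I_n}, spinc_set M S /\ #|S| = n).
Proof.
move=> n_ge5 odd_n HM [S [spinc_S card_S]].
have S_full : S = [set: 'I_n].
  by apply/eqP; rewrite eqEcard subsetT cardsT card_ord card_S leqnn.
subst S.
have n_gt0 : 0 < n by apply: leq_trans n_ge5.
apply: (@no_odd_tournament _ (fun i k => lo (M i k)) _ _ _ (Ordinal n_gt0)).
- by rewrite card_ord.
- exact: odd_off_column.
- move=> a b c; apply: HW_triple_rule => //.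
  exact: leq_trans n_ge5.
Qed.
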